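(* Under the standing assumptions below, fix $i\in P$. Then the family $\{\,t^{\,i-r}e^r_j : r\in P,\ r<i,\ 1\le j\le b_r\,\}$ (indexed by the pairs $(r,j)$) is $R$-linearly independent in $M_i$.
   Context: Standing assumptions: $R$ is a principal ideal domain; $P$ is a lattice with a compatible abelian group structure ($(P,+,0)$ abelian group, $a\le b\Rightarrow a+c\le b+c$). $U_0=\{s\in P:s\ge 0\}$, $R[U_0]$ the monoid ring (finite sums $\sum c_st^s$, $c_s\in R$), graded by $\deg(ct^s)=s$. $M=\bigoplus_{a\in P}M_a$ is a $P$-graded $R[U_0]$-module (persistence module) that is graded projective, with each $M_a$ a finitely generated $R$-module. For $r\in P$, $D_r=\sum_{q<r}t^{\,r-q}M_q\subseteq M_r$; the quotient $M_r/D_r$ is a free $R$-module of finite rank $b_r$, and for each $r$ one fixes elements $e^r_1,\dots,e^r_{b_r}\in M_r\setminus D_r$ whose classes form an $R$-basis of $M_r/D_r$. *)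

From HB Require Import structures.
From mathcomp Require Import all_boot all_order all_algebra.
Set Implicit Arguments. Unset Strict Implicit. Unset Printing Implicit Defensive.
Import Order.TTheory GRing.Theory Num.Theory.
Local Open Scope ring_scope.

Definition is_sup (P : porderZmodType) (a b j : P) : Prop :=
  [/\ a <= j, b <= j & forall z, a <= z -> b <= z -> j <= z].
Definition is_inf (P : porderZmodType) (a b m : P) : Prop :=
  [/\ m <= a, m <= b & forall z, z <= a -> z <= b -> z <= m].
Definition is_lattice (P : porderZmodType) : Prop :=
  forall a b : P, (exists j, is_sup a b j) /\ (exists m, is_inf a b m).

Definition ordered_group (P : porderZmodType) : Prop :=
  forall a b c : P, a <= b -> a + c <= b + c.

Definition ideal_of (R : idomainType) (I : R -> Prop) : Prop :=
  [/\ I 0, (forall x y, I x -> I y -> I (x + y)) & (forall r x, I x -> I (r * x))].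
Definition is_PID (R : idomainType) : Prop :=
  forall I : R -> Prop, ideal_of I -> exists g : R, forall x, I x <-> exists r, x = r * g.

(* Persistence modules (P-graded R[U_0]-modules), presented as families of
   R-modules M_a with structure maps t^{b-a} : M_a -> M_b for a <= b
   (the values of pm_map for a not <= b are irrelevant and never used). *)
Record pmod (R : idomainType) d (P : porderType d) := PMod {
  pm_obj : P -> lmodType R;
  pm_map : forall a b : P, {linear pm_obj a -> pm_obj b}
}.

Definition is_pmod (R : idomainType) d (P : porderType d) (M : pmod R P) : Prop :=
  (forall a x, pm_map M a a x = x) /\
  (forall a b c x, (a <= b)%O -> (b <= c)%O ->
      pm_map M a c x = pm_map M b c (pm_map M a b x)).

Definition pmod_hom (R : idomainType) d (P : porderType d) (M N : pmod R P)
    (phi : forall a, {linear pm_obj M a -> pm_obj N a}) : Prop :=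
  forall a b x, (a <= b)%O -> phi b (pm_map M a b x) = pm_map N a b (phi a x).

Definition graded_projective (R : idomainType) d (P : porderType d) (M : pmod R P) : Prop :=
  forall (N N' : pmod R P), is_pmod N -> is_pmod N' ->
  forall (g : forall a, {linear pm_obj N a -> pm_obj N' a}),
    pmod_hom g -> (forall a y, exists x, g a x = y) ->
  forall (f : forall a, {linear pm_obj M a -> pm_obj N' a}), pmod_hom f ->
  exists h : forall a, {linear pm_obj M a -> pm_obj N a},
    pmod_hom h /\ forall a x, g a (h a x) = f a x.

Definition fin_gen (R : idomainType) (V : lmodType R) : Prop :=
  exists s : seq V, forall x : V, exists c : 'I_(size s) -> R,
    x = \sum_(k < size s) c k *: s`_k.

(* Membership in D_r = sum_{q < r} t^{r-q} M_q  (a submodule of M_r). *)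
Definition inD (R : idomainType) d (P : porderType d) (M : pmod R P) (r : P)
    (x : pm_obj M r) : Prop :=
  exists s : seq {q : P & pm_obj M q},
    all (fun p => (tag p < r)%O) s /\
    x = \sum_(p <- s) pm_map M (tag p) r (tagged p).

Arguments inD {R d P} M {r} x.

(* e_1,...,e_n in M_r \ D_r whose classes form an R-basis of M_r / D_r. *)
Definition quot_basis (R : idomainType) d (P : porderType d) (M : pmod R P) (r : P)
    (n : nat) (e : 'I_n -> pm_obj M r) : Prop :=
  [/\ forall j, ~ inD M (e j),
      forall x : pm_obj M r, exists c : 'I_n -> R,
        inD M (x - \sum_(j < n) c j *: e j)
    & forall c : 'I_n -> R, inD M (\sum_(j < n) c j *: e j) -> forall j, c j = 0].

(* Fix a degree r and an index j0 of the quotient basis of M_r / D_r.  The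
   j0-th coordinate of M_r / D_r, read in degree r only, is a graded map from M
   to the skyscraper module R concentrated in degree r, since it kills D_r.
   Projectivity of M lifts it along a graded surjection from a module in which
   degree r maps isomorphically onto the skyscraper and the structure maps out
   of degree q are the identity when r <= q and zero otherwise.  Applying the
   lift in degree i to a relation sum c_(q,j) t^(i-q) e^q_j = 0 with r maximal
   among the degrees carrying a nonzero coefficient leaves only c_(r,j0). *)

From HB Require Import structures.
From mathcomp Require Import all_boot all_order all_algebra.
From Stdlib Require Import ClassicalEpsilon.
Import Order.TTheory GRing.Theory.
Set Implicit Arguments. Unset Strict Implicit. Unset Printing Implicit Defensive.

Local Open Scope ring_scope.

Section SubmoduleD.

Variables (R : idomainType) (d : Order.disp_t) (P : porderType d).
Variables (M : pmod R P) (r : P).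

Lemma inD0 : inD M (0 : pm_obj M r).
Proof. by exists [::]; rewrite big_nil. Qed.

Lemma inDD (x y : pm_obj M r) : inD M x -> inD M y -> inD M (x + y).
Proof.
move=> [s1 [lt1 ->]] [s2 [lt2 ->]]; exists (s1 ++ s2).
by rewrite all_cat lt1 lt2 big_cat.
Qed.

Lemma inDZ (k : R) (x : pm_obj M r) : inD M x -> inD M (k *: x).
Proof.
move=> [s [lts ->]].
exists [seq existT (fun q => pm_obj M q) (tag p) (k *: tagged p) | p <- s]; split.
  by rewrite all_map; apply: sub_all lts => p.
by rewrite big_map scaler_sumr; apply: eq_bigr => p _; rewrite linearZ.
Qed.

Lemma inDB (x y : pm_obj M r) : inD M x -> inD M y -> inD M (x - y).
Proof. by move=> Dx Dy; apply: inDD Dx _; rewrite -scaleN1r; apply: inDZ. Qed.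

Lemma inD_map (q : P) (x : pm_obj M q) : (q < r)%O -> inD M (pm_map M q r x).
Proof.
by move=> qr; exists [:: Tagged (fun a => pm_obj M a) x]; rewrite /= qr big_seq1.
Qed.

End SubmoduleD.

Section QuotientCoordinates.

Variables (R : idomainType) (d : Order.disp_t) (P : porderType d).
Variables (M : pmod R P) (r : P) (n : nat) (e : 'I_n -> pm_obj M r).
Hypothesis e_basis : quot_basis e.

Definition quot_coord (x : pm_obj M r) : 'I_n -> R :=
  epsilon (inhabits (fun _ => 0)) (fun c => inD M (x - \sum_j c j *: e j)).

Lemma quot_coordP x : inD M (x - \sum_j quot_coord x j *: e j).
Proof.
have [_ span _] := e_basis.
exact: (epsilon_spec _ (fun c => inD M (x - \sum_j c j *: e j)) (span x)).
Qed.

Lemma quot_coord_unique x (c : 'I_n -> R) :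
  inD M (x - \sum_j c j *: e j) -> quot_coord x =1 c.
Proof.
move=> Dc j; apply/eqP; rewrite -subr_eq0; apply/eqP; move: j.
case: e_basis => _ _; apply.
have -> : \sum_j (quot_coord x j - c j) *: e j =
          (x - \sum_j c j *: e j) - (x - \sum_j quot_coord x j *: e j).
  by rewrite opprB addrC addrA subrK -sumrB; apply: eq_bigr => j _; rewrite scalerBl.
exact: inDB Dc (quot_coordP x).
Qed.

Lemma quot_coordZD k x y j :
  quot_coord (k *: x + y) j = k * quot_coord x j + quot_coord y j.
Proof.
apply: (@quot_coord_unique _ (fun j => k * quot_coord x j + quot_coord y j)).
have -> : k *: x + y - \sum_j (k * quot_coord x j + quot_coord y j) *: e j =
  k *: (x - \sum_j quot_coord x j *: e j) + (y - \sum_j quot_coord y j *: e j).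
  rewrite scalerBr scaler_sumr addrACA -opprD -big_split /=; congr (_ - _).
  by apply: eq_bigr => l _; rewrite scalerDl scalerA.
by apply: inDD; [apply: inDZ|]; apply: quot_coordP.
Qed.

Lemma quot_coord_inD x : inD M x -> quot_coord x =1 fun=> 0.
Proof.
by move=> Dx; apply: quot_coord_unique; rewrite big1 ?subr0 // => j _; rewrite scale0r.
Qed.

Lemma quot_coord_basis j : quot_coord (e j) =1 fun k => (k == j)%:R.
Proof.
apply: quot_coord_unique; rewrite (bigD1 j) //= eqxx scale1r big1 ?addr0 ?subrr.
  exact: inD0.
by move=> k /negbTE ->; rewrite scale0r.
Qed.

(* Coordinates indexed by nat, so that they can be compared across degrees
   whose bases have different index types; out-of-range indices give 0. *)
Definition quot_coordn (x : pm_obj M r) (m : nat) : R :=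
  if insub m is Some j then quot_coord x j else 0.

Lemma quot_coordnZD k x y m :
  quot_coordn (k *: x + y) m = k * quot_coordn x m + quot_coordn y m.
Proof.
by rewrite /quot_coordn; case: insub => [j|]; rewrite ?quot_coordZD ?mulr0 ?addr0.
Qed.

Lemma quot_coordn_inD x m : inD M x -> quot_coordn x m = 0.
Proof.
by move=> Dx; rewrite /quot_coordn; case: insub => // j; apply: quot_coord_inD.
Qed.

Lemma quot_coordn_basis j m : quot_coordn (e j) m = (nat_of_ord j == m)%:R.
Proof.
rewrite /quot_coordn; case: insubP => [k _ <-|].
  by rewrite quot_coord_basis eq_sym.
by case: eqP => // <-; rewrite ltn_ord.
Qed.

End QuotientCoordinates.

Section RowsOfWidthAtMostOne.

Variable R : pzRingType.

Lemma mul_const1E m n (x : 'M[R]_(m, 1)) i k :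
  (x *m const_mx 1 : 'M_(m, n)) i k = x i 0.
Proof. by rewrite !mxE big_ord1 mxE mulr1. Qed.

Lemma mul_const1_small n (x : 'rV[R]_n) : (n <= 1)%N -> x *m const_mx 1 = x.
Proof.
case: n x => [|[|//]] x _; first by rewrite thinmx0 [x]thinmx0.
by apply/matrixP => i k; rewrite mul_const1E !ord1.
Qed.

Lemma mul_const1K n (x : 'rV[R]_n) :
  (n <= 1)%N -> x *m (const_mx 1 : 'M_(n, 1)) *m const_mx 1 = x.
Proof.
case: n x => [|[|//]] x _; first by rewrite thinmx0 [x]thinmx0.
by apply/matrixP => i k; rewrite mul_const1E mul_const1E !ord1.
Qed.

Lemma mul_const0 m n p (x : 'M[R]_(m, n)) : x *m (const_mx 0 : 'M_(n, p)) = 0.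
Proof. by apply/matrixP => i k; rewrite !mxE big1 // => l _; rewrite mxE mulr0. Qed.

End RowsOfWidthAtMostOne.

Section SkyscraperCover.

Variables (R : idomainType) (d : Order.disp_t) (P : porderType d) (r : P).

(* Degree a carries the row space 'rV_(a == r): R in degree r, 0 elsewhere. *)
Definition skyscraper : pmod R P :=
  @PMod R _ P (fun a => 'rV[R]_(a == r)) (fun a b => mulmxr (const_mx (a == b)%:R)).

Definition skyscraper_cover : pmod R P :=
  @PMod R _ P (fun=> 'rV[R]_1) (fun a b => mulmxr (((r <= a)%O || (a == b))%:R%:M)).

Definition skyscraper_proj a :
  {linear pm_obj skyscraper_cover a -> pm_obj skyscraper a} := mulmxr (const_mx 1).

Lemma skyscraper_pmod : is_pmod skyscraper.
Proof.
split=> [a x|a b c x ab bc] /=; first by rewrite (eqxx a) mul_const1_small ?leq_b1.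
have [<-|/negbTE nab] := eqVneq a b; first by rewrite mul_const1_small ?leq_b1.
have -> : (a == c) = false.
  by apply: contraFF nab => /eqP ac; rewrite eq_le ab ac bc.
by rewrite !mul_const0 mul0mx.
Qed.

Lemma skyscraper_cover_pmod : is_pmod skyscraper_cover.
Proof.
split=> [a x|a b c x ab bc] /=; first by rewrite eqxx orbT mulmx1.
rewrite !mul_mx_scalar scalerA -natrM.
have [ra|ra] /= := boolP (r <= a)%O; first by rewrite (le_trans ra ab).
have [<-|nab] := eqVneq a b; first by rewrite (negbTE ra) muln1.
rewrite muln0; have [ac|//] := eqVneq a c.
by case/eqP: nab; apply: le_anti; rewrite ab ac bc.
Qed.

Lemma skyscraper_proj_hom : pmod_hom skyscraper_proj.
Proof.
move=> a b x ab /=; rewrite mul_mx_scalar.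
have [<-|nab] := eqVneq a b; first by rewrite orbT scale1r mul_const1_small ?leq_b1.
rewrite orbF mul_const0.
have [ra|_] := boolP (r <= a)%O; last by rewrite scale0r mul0mx.
apply/matrixP => i [k kb]; have /eqP br : b == r by case: (b == r) kb.
by case/eqP: nab; apply: le_anti; rewrite ab br ra.
Qed.

Lemma skyscraper_proj_surj a y : exists x, skyscraper_proj a x = y.
Proof. by exists (y *m const_mx 1); rewrite /= mul_const1K ?leq_b1. Qed.

End SkyscraperCover.

Section LiftedCoordinate.

Variables (R : idomainType) (d : Order.disp_t) (P : porderType d) (M : pmod R P).
Variables (b : P -> nat) (e : forall r : P, 'I_(b r) -> pm_obj M r).
Arguments e : clear implicits.
Hypotheses (e_basis : forall r : P, quot_basis (e r)) (M_pmod : is_pmod M).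
Hypothesis M_proj : graded_projective M.
Variables (r : P) (n : nat).

Definition skyscraper_coord a (x : pm_obj M a) : pm_obj (skyscraper R r) a :=
  \row_(k < a == r) quot_coordn (e a) x n.

Lemma skyscraper_coord_is_linear a : linear (@skyscraper_coord a).
Proof. by move=> k x y; apply/matrixP => i j; rewrite !mxE quot_coordnZD. Qed.

HB.instance Definition _ a :=
  GRing.isLinear.Build R (pm_obj M a) (pm_obj (skyscraper R r) a) *:%R
    (@skyscraper_coord a) (@skyscraper_coord_is_linear a).

Lemma skyscraper_coord_hom :
  pmod_hom (fun a => @skyscraper_coord a : {linear _ -> _}).
Proof.
case: M_pmod => map_id _ a c x ac /=.
have [<-|nac] := eqVneq a c; first by rewrite map_id mul_const1_small ?leq_b1.
rewrite mul_const0; apply/matrixP => i k; rewrite !mxE quot_coordn_inD //.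
by apply: inD_map; rewrite lt_neqAle nac.
Qed.

Lemma lift_skyscraper_coord :
  exists h : forall a, {linear pm_obj M a -> pm_obj (skyscraper_cover R r) a},
    pmod_hom h /\ forall a x, skyscraper_proj R r a (h a x) = skyscraper_coord x.
Proof.
exact: M_proj (skyscraper_cover_pmod R r) (skyscraper_pmod R r) _
  (@skyscraper_proj_hom R _ _ r) (@skyscraper_proj_surj R _ _ r) _ skyscraper_coord_hom.
Qed.

Variable h : forall a, {linear pm_obj M a -> pm_obj (skyscraper_cover R r) a}.
Hypothesis h_hom : pmod_hom h.
Hypothesis h_lift : forall a x, skyscraper_proj R r a (h a x) = skyscraper_coord x.

Lemma lift_map a c (x : pm_obj M a) :
  (a < c)%O -> h c (pm_map M a c x) 0 0 = (r <= a)%O%:R * h a x 0 0.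
Proof.
by move=> ac; rewrite h_hom /= ?(ltW ac) // mul_mx_scalar (lt_eqF ac) orbF mxE.
Qed.

Lemma lift_basis j : h r (e r j) 0 0 = (nat_of_ord j == n)%:R.
Proof.
have k : 'I_(r == r) by rewrite eqxx; exact: ord0.
have := congr1 (fun y : 'rV[R]_(r == r) => y 0 k) (h_lift (e r j)).
by rewrite mul_const1E mxE quot_coordn_basis.
Qed.

End LiftedCoordinate.

Lemma exists_maximal (T : eqType) d (P : porderType d) (f : T -> P) (s : seq T) :
  s != [::] -> exists2 x, x \in s & forall y, y \in s -> ~~ (f x < f y)%O.
Proof.
elim: s => // y s IHs _; have [->|/IHs [m ms m_max]] := eqVneq s [::].
  by exists y; rewrite ?mem_seq1 // => z; rewrite mem_seq1 => /eqP ->; rewrite ltxx.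
have [my|ym] := boolP (f m < f y)%O.
  exists y; rewrite ?mem_head // => z; rewrite in_cons => /predU1P [->|zs].
    by rewrite ltxx.
  by apply: contra (m_max z zs); apply: lt_trans.
exists m; rewrite ?in_cons ?ms ?orbT // => z /predU1P [->|]; [exact: ym | exact: m_max].
Qed.

Lemma relation_coef_maximal_eq0 (R : idomainType) d (P : porderType d)
    (M : pmod R P) (b : P -> nat) (e : forall r : P, 'I_(b r) -> pm_obj M r) (i : P) :
  (forall r : P, quot_basis (e r)) -> is_pmod M -> graded_projective M ->
  forall (s : seq {r : P & 'I_(b r)}) (c : {r : P & 'I_(b r)} -> R),
    uniq s -> all (fun p => tag p < i)%O s ->
    \sum_(p <- s) c p *: pm_map M (tag p) i (e (tag p) (tagged p)) = 0 ->
  forall p0, p0 \in s -> (forall p, p \in s -> c p != 0 -> ~~ (tag p0 < tag p)%O) ->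
  c p0 = 0.
Proof.
move=> e_basis M_pmod M_proj s c s_uniq s_lt rel [r j0] p0s p0_max.
have [h [h_hom h_lift]] := lift_skyscraper_coord e_basis M_pmod M_proj r j0.
pose p0 := Tagged (fun q => 'I_(b q)) j0.
have term p : p \in s ->
    h i (c p *: pm_map M (tag p) i (e (tag p) (tagged p))) 0 0 = c p * (p == p0)%:R.
  case: p => q j qs /=; rewrite linearZ mxE (lift_map h_hom) ?(allP s_lt _ qs) //.
  have [rq|rq] := boolP (r <= q)%O; last first.
    have /negbTE -> : Tagged (fun q => 'I_(b q)) j != p0.
      by apply: contraNneq rq => /(congr1 tag) /= ->.
    by rewrite mul0r mulr0.
  have [qr|rq'] := eqVneq q r; last first.
    by rewrite (contraTeq (p0_max _ qs)) ?mul0r //= lt_def rq' rq.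
  by subst q; rewrite (lift_basis e_basis h_lift) eq_Tagged mul1r.
have := congr1 (fun x => h i x 0 0) rel.
rewrite linear_sum raddf0 mxE summxE big_seq (eq_bigr _ term) -big_seq.
rewrite (bigD1_seq _ p0s s_uniq) /= eqxx mulr1 big1 ?addr0 // => p /negbTE ->.
by rewrite mulr0.
Qed.

Theorem proposition3p17 (R : idomainType) (P : porderZmodType)
  (M : pmod R P) (b : P -> nat) (e : forall r : P, 'I_(b r) -> pm_obj M r) (i : P) :
  is_PID R ->
  is_lattice P ->
  ordered_group P ->
  is_pmod M ->
  graded_projective M ->
  (forall a : P, fin_gen (pm_obj M a)) ->
  (forall r : P, quot_basis (e r)) ->
  forall (s : seq {r : P & 'I_(b r)}) (c : {r : P & 'I_(b r)} -> R),
    uniq s ->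
    all (fun p => tag p < i) s ->
    \sum_(p <- s) c p *: pm_map M (tag p) i (e (tag p) (tagged p)) = 0 ->
    forall p, p \in s -> c p = 0.
Proof.
move=> _ _ _ M_pmod M_proj _ e_basis s c s_uniq s_lt rel p ps.
apply/eqP; apply: contraT => cp.
have p_nz : p \in [seq q <- s | c q != 0] by rewrite mem_filter cp.
have nz_ne0 : [seq q <- s | c q != 0] != [::] by apply: contraTneq p_nz => ->.
have [m] := exists_maximal tag nz_ne0; rewrite mem_filter => /andP [cm ms] m_max.
suff cm0 : c m = 0 by rewrite cm0 eqxx in cm.
apply: (relation_coef_maximal_eq0 e_basis M_pmod M_proj s_uniq s_lt rel ms).
by move=> q qs cq; apply: m_max; rewrite mem_filter cq.
Qed.
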